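(* Let $S$ be a semigroup with finite $\mathcal{R}$-height, and let $A$ be a right ideal of $S$. Then $\mathrm{H}_{\mathcal{R}}(A)\leq 2\,\mathrm{H}_{\mathcal{R}}(S)-1$.
   Context: For a semigroup $S$, $S^1$ denotes $S$ with an identity adjoined if necessary. Green's preorder: $a\leq_{\mathcal{R}} b$ iff $aS^1\subseteq bS^1$; $\mathcal{R}$ is the associated equivalence; the $\mathcal{R}$-height $\mathrm{H}_{\mathcal{R}}$ of a semigroup is the supremum of the cardinalities of chains in its poset of $\mathcal{R}$-classes. A right ideal is a non-empty subset $A$ with $AS\subseteq A$; $\mathrm{H}_{\mathcal{R}}(A)$ is computed in $A$ itself. *)

(* Subsets are predicates P : T -> Prop; the whole semigroup
   is (fun _ => True).  Green's R-preorder is computed inside the subset P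
   (which is assumed to be a subsemigroup, e.g. S itself or a right ideal). *)
From Stdlib Require Import Arith.

Set Implicit Arguments.

Section Green.
Variable T : Type.
Variable op : T -> T -> T.

Definition associative_op : Prop :=
  forall x y z, op x (op y z) = op (op x y) z.

Definition leR (P : T -> Prop) (a b : T) : Prop :=
  a = b \/ exists c, P c /\ a = op b c.

Definition ltR (P : T -> Prop) (a b : T) : Prop :=
  leR P a b /\ ~ leR P b a.

(* f 0, ..., f (n-1) are elements of P whose R-classes (in P) form a
   strictly increasing chain of n distinct R-classes *)
Definition R_chain (P : T -> Prop) (f : nat -> T) (n : nat) : Prop :=
  (forall i, i < n -> P (f i)) /\
  (forall i j, i < j -> j < n -> ltR P (f i) (f j)).

Definition R_height_le (P : T -> Prop) (h : nat) : Prop :=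
  forall f n, R_chain P f n -> n <= h.

Definition is_R_height (P : T -> Prop) (h : nat) : Prop :=
  R_height_le P h /\ exists f, R_chain P f h.

Definition right_ideal (A : T -> Prop) : Prop :=
  (exists a, A a) /\ forall a s, A a -> A (op a s).

End Green.

(* In a right ideal A of S, two consecutive strict steps a <_A b <_A c of an
   R-chain of A already give a strict step a <_S c: if c were R-below a in S,
   then c = b p r (or b p) with p in A, and p r lies in A because A is a right
   ideal, so c <=_A b.  Hence every other element of an A-chain of length n
   forms an S-chain of length about n/2.  One more S-class is gained at the
   bottom: either a <_S b already holds for the two lowest elements a <_A b,
   or a a <_S a.  An A-chain of length n thus yields an S-chain of length
   n/2 + 1, so n <= 2 H_R(S) - 1. *)
From Stdlib Require Import Arith Lia Classical.

Set Implicit Arguments.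

Section RightIdealChains.
Variable T : Type.
Variable op : T -> T -> T.
Hypothesis op_assoc : associative_op op.

Local Notation whole := (fun _ : T => True).

Lemma leR_sub (P Q : T -> Prop) a b :
  (forall x, P x -> Q x) -> leR op P a b -> leR op Q a b.
Proof.
  intros PQ [-> | [c [Pc ->]]]; [left | right; exists c]; auto.
Qed.

Lemma leR_mulr a c : leR op whole (op a c) a.
Proof. right; exists c; auto. Qed.

Lemma leR_trans a b c : leR op whole a b -> leR op whole b c -> leR op whole a c.
Proof.
  intros [-> | [x [_ ->]]] [-> | [y [_ ->]]].
  - now left.
  - apply leR_mulr.
  - apply leR_mulr.
  - rewrite <- op_assoc; apply leR_mulr.
Qed.

Lemma ltR_trans a b c : ltR op whole a b -> ltR op whole b c -> ltR op whole a c.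
Proof.
  intros [ab nba] [bc ncb]; split.
  - apply leR_trans with b; assumption.
  - intro ca; apply ncb, leR_trans with a; assumption.
Qed.

Lemma R_chain_cons (g : nat -> T) m y :
  R_chain op whole g m -> ltR op whole y (g 0) ->
  R_chain op whole (fun k => match k with 0 => y | S k => g k end) (S m).
Proof.
  intros [_ g_lt] y_lt; split; [auto |].
  intros [| i] [| j] ij jm; try lia.
  - destruct j as [| j]; [exact y_lt |].
    apply ltR_trans with (g 0); [exact y_lt | apply g_lt; lia].
  - apply g_lt; lia.
Qed.

Variable A : T -> Prop.
Hypothesis A_mulr : forall a s, A a -> A (op a s).

Lemma ltR_ideal_skip a b c : ltR op A a b -> ltR op A b c -> ltR op whole a c.
Proof.
  intros [ab nba] [bc ncb]; split.
  - apply leR_trans with b; apply leR_sub with A; auto.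
  - intros ca; apply ncb.
    destruct ab as [-> | [p [Ap ->]]]; [now destruct nba; left |].
    destruct ca as [-> | [r [_ ->]]].
    + right; exists p; auto.
    + right; exists (op p r); auto.
Qed.

Lemma ltR_ideal_or_square a b :
  A a -> ltR op A a b -> ltR op whole a b \/ ltR op whole (op a a) a.
Proof.
  intros Aa [ab nba].
  destruct (classic (leR op whole a (op a a))) as [a_sq | n_a_sq];
    [left | right; split; [apply leR_mulr | exact n_a_sq]].
  split; [apply leR_sub with A; auto |].
  intros [-> | [r [_ ->]]]; [now apply nba; left |].
  apply nba; right.
  destruct a_sq as [e | [y [_ e]]].
  - exists (op a r); split; [auto |].
    rewrite op_assoc, <- e; reflexivity.
  - exists (op (op a y) r); split; [auto |].
    rewrite op_assoc, op_assoc, <- e; reflexivity.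
Qed.

Lemma ideal_chain_stride2 f n d m :
  R_chain op A f n -> d + 2 * m <= S n ->
  R_chain op whole (fun k => f (d + 2 * k)) m.
Proof.
  intros [_ f_lt] dm; split; [auto |].
  intros i j ij jm.
  apply ltR_ideal_skip with (f (d + 2 * i + 1)); apply f_lt; lia.
Qed.

Lemma ideal_chain_halves f n :
  R_chain op A f n -> 0 < n -> exists g, R_chain op whole g (S (n / 2)).
Proof.
  intros fc n_pos.
  destruct (Nat.eq_dec n 1) as [-> | n_ne1].
  { exists f; split; [auto | simpl; lia]. }
  pose proof fc as [f_in f_lt].
  pose proof (Nat.Div0.mul_div_le n 2).
  destruct (ltR_ideal_or_square (f_in 0 ltac:(lia)) (f_lt 0 1 ltac:(lia) ltac:(lia)))
    as [f01 | sq].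
  - eexists; apply R_chain_cons; [apply (ideal_chain_stride2 1 (n / 2) fc); lia |].
    exact f01.
  - eexists; apply R_chain_cons; [apply (ideal_chain_stride2 0 (n / 2) fc); lia |].
    exact sq.
Qed.

Lemma ideal_chain_length_le h f n :
  R_height_le op whole h -> R_chain op A f n -> n <= 2 * h - 1.
Proof.
  intros hS fc.
  destruct (Nat.eq_dec n 0) as [-> | n_ne0]; [lia |].
  destruct (ideal_chain_halves fc ltac:(lia)) as [g gc].
  pose proof (hS g _ gc).
  pose proof (Nat.div_mod n 2 ltac:(lia)).
  pose proof (Nat.mod_upper_bound n 2 ltac:(lia)).
  lia.
Qed.

End RightIdealChains.

Lemma bounded_nat_pred_has_max (P : nat -> Prop) B :
  P 0 -> (forall n, P n -> n <= B) -> exists m, P m /\ forall n, P n -> n <= m.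
Proof.
  revert P; induction B as [| B IH]; intros P P0 P_le.
  - exists 0; auto.
  - destruct (classic (P (S B))) as [PSB | nPSB]; [exists (S B); auto |].
    apply IH; auto.
    intros n Pn; specialize (P_le n Pn).
    destruct (Nat.eq_dec n (S B)) as [-> | ]; [contradiction | lia].
Qed.

Theorem corollary3p7 (T : Type) (op : T -> T -> T)
  (Hassoc : associative_op op) (A : T -> Prop) (hS : nat) :
  is_R_height op (fun _ => True) hS ->
  right_ideal op A ->
  exists hA, is_R_height op A hA /\ hA <= 2 * hS - 1.
Proof.
  intros [hS_le _] [[a _] A_mulr].
  destruct (@bounded_nat_pred_has_max (fun n => exists f, R_chain op A f n) (2 * hS - 1))
    as [m [[f fc] m_max]].
  - exists (fun _ => a); split; intros; lia.
  - intros n [f fc]; exact (ideal_chain_length_le Hassoc A_mulr hS_le fc).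
  - exists m; split; [split; [intros g n gc; eauto | eauto] |].
    exact (ideal_chain_length_le Hassoc A_mulr hS_le fc).
Qed.
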